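(* Assume the linear setting of the context. The function $f(\phi)=\sum_{k=1}^N c_k^{\rm e}\big(\exp(-q_k-z_k\phi)-1\big)$, $\phi\in\mathbb R$, has a unique minimizer $\phi_{\min}$. If $f(\phi_{\min})<0$, the linear pump-leak system has exactly one steady state $(\mathbf c^*,v^*,\phi^* )\in(0,\infty)^N\times(0,\infty)\times\mathbb R$; if $f(\phi_{\min})\ge 0$, it has no steady state.
   Context: Fix an integer $N\ge2$, real valences $z_1,\dots,z_N$ not all zero, $\mathbf z=(z_1,\dots,z_N)^T$, positive constants $c_1^{\rm e},\dots,c_N^{\rm e}$ with $\sum_kz_kc_k^{\rm e}=0$, a constant $A>0$ and a real number $z$. Let $L$ be a real symmetric positive definite $N\times N$ matrix, $\mathbf p\in\mathbb R^N$ a constant vector, $\zeta>0$, and $\mathbf q=(q_1,\dots,q_N)^T=L^{-1}\mathbf p$. For $\mathbf c\in(0,\infty)^N$, $v>0$, $\phi\in\mathbb R$ set $\gamma_k=\ln(c_k/c_k^{\rm e})$, $\mu_k=\gamma_k+z_k\phi$, $\boldsymbol\mu=(\mu_1,\dots,\mu_N)^T$, $\pi_{\rm w}=\sum_kc_k^{\rm e}-(\sum_kc_k+A/v)$. The linear pump-leak system is $$\frac{d}{dt}(v\mathbf c)=-L\boldsymbol\mu-\mathbf p,\qquad 0=\sum_kz_kc_k+\frac{zA}{v},\qquad \frac{dv}{dt}=-\zeta\pi_{\rm w}.$$ A steady state is a point $(\mathbf c,v,\phi)\in(0,\infty)^N\times(0,\infty)\times\mathbb R$ with $\sum_kz_kc_k+zA/v=0$,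 $L\boldsymbol\mu+\mathbf p=0$ and $\pi_{\rm w}=0$. *)

From Stdlib Require Import Reals Lra Lia.
Open Scope R_scope.

(* rsum n f = f 0 + ... + f (n-1); indices 0..N-1 stand for species 1..N. *)
Fixpoint rsum (n : nat) (f : nat -> R) : R :=
  match n with
  | O => 0
  | S m => rsum m f + f m
  end.

Definition mu (ce zv c : nat -> R) (phi : R) (k : nat) : R :=
  ln (c k / ce k) + zv k * phi.

Definition pi_w (N : nat) (ce c : nat -> R) (A v : R) : R :=
  rsum N ce - (rsum N c + A / v).

Definition steady_state (N : nat) (zv ce : nat -> R) (A z : R)
    (L : nat -> nat -> R) (p : nat -> R)
    (c : nat -> R) (v phi : R) : Prop :=
  (forall k, (k < N)%nat -> 0 < c k) /\ 0 < v /\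
  rsum N (fun k => zv k * c k) + z * A / v = 0 /\
  (forall i, (i < N)%nat ->
     rsum N (fun j => L i j * mu ce zv c phi j) + p i = 0) /\
  pi_w N ce c A v = 0.

Definition f_lin (N : nat) (ce zv q : nat -> R) (phi : R) : R :=
  rsum N (fun k => ce k * (exp (- q k - zv k * phi) - 1)).

From Stdlib Require Import Reals Lra Lia Psatz Classical.
Open Scope R_scope.

(* Positive definiteness of L forces c_k = c_k^e exp(-q_k - z_k phi) at a steady state;
   then pi_w = 0 reads A/v = -f(phi), and electroneutrality becomes f'(phi) + z f(phi) = 0.
   So steady states correspond to the zeros of f' + z f in {f < 0}.  Neutrality of c^e
   forces charges of both signs, so f is strictly convex and tends to +oo on both sides:
   it has a unique minimizer, {f < 0} is empty when f(phi_min) >= 0, and otherwise it is an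
   interval (a, b) with f'(a) < 0 < f'(b), across which f' + z f changes sign.  That zero is
   unique: at two such points x < y the tangent inequalities give
   0 < f(y)/f(x) < 1 - z (y - x) and 0 < f(x)/f(y) < 1 + z (y - x), whose product is absurd. *)

Lemma rsum_ext n F G : (forall k, (k < n)%nat -> F k = G k) -> rsum n F = rsum n G.
Proof.
  induction n as [|n IH]; intros H; simpl; [reflexivity|].
  rewrite IH by (intros; apply H; lia). rewrite H by lia. reflexivity.
Qed.

Lemma rsum_zero n : rsum n (fun _ => 0) = 0.
Proof. induction n as [|n IH]; simpl; lra. Qed.

Lemma rsum_plus n F G : rsum n (fun k => F k + G k) = rsum n F + rsum n G.
Proof. induction n as [|n IH]; simpl; [ring|rewrite IH; ring]. Qed.

Lemma rsum_minus n F G : rsum n (fun k => F k - G k) = rsum n F - rsum n G.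
Proof. induction n as [|n IH]; simpl; [ring|rewrite IH; ring]. Qed.

Lemma rsum_opp n F : rsum n (fun k => - F k) = - rsum n F.
Proof. induction n as [|n IH]; simpl; [ring|rewrite IH; ring]. Qed.

Lemma rsum_scal_l n a F : rsum n (fun k => a * F k) = a * rsum n F.
Proof. induction n as [|n IH]; simpl; [ring|rewrite IH; ring]. Qed.

Lemma rsum_scal_r n a F : rsum n (fun k => F k * a) = rsum n F * a.
Proof. induction n as [|n IH]; simpl; [ring|rewrite IH; ring]. Qed.

Lemma rsum_le n F G : (forall k, (k < n)%nat -> F k <= G k) -> rsum n F <= rsum n G.
Proof.
  induction n as [|n IH]; intros H; simpl; [lra|].
  assert (rsum n F <= rsum n G) by (apply IH; intros; apply H; lia).
  assert (F n <= G n) by (apply H; lia). lra.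
Qed.

Lemma rsum_le_gap n F G j : (forall k, (k < n)%nat -> F k <= G k) -> (j < n)%nat ->
  rsum n F + (G j - F j) <= rsum n G.
Proof.
  induction n as [|n IH]; intros H Hj; simpl; [lia|].
  assert (F n <= G n) by (apply H; lia).
  destruct (Nat.eq_dec j n) as [->|Hne].
  - assert (rsum n F <= rsum n G) by (apply rsum_le; intros; apply H; lia). lra.
  - assert (rsum n F + (G j - F j) <= rsum n G) by (apply IH; [intros; apply H|]; lia).
    lra.
Qed.

Lemma rsum_continuity n (F : nat -> R -> R) : (forall k, continuity (F k)) ->
  continuity (fun x => rsum n (fun k => F k x)).
Proof.
  intros H; induction n as [|n IH]; simpl.
  - apply continuity_const. now intros x y.
  - exact (continuity_plus _ _ IH (H n)).
Qed.
Lemma exists_root_strictly_between g x y : continuity g -> x < y -> g x * g y < 0 ->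
  exists r, x < r < y /\ g r = 0.
Proof.
  intros Hg Hxy Hsign.
  destruct (IVT_cor g x y Hg (Rlt_le _ _ Hxy) (Rlt_le _ _ Hsign)) as [r [[Hxr Hry] Hr]].
  exists r; split; [split|exact Hr].
  - destruct Hxr as [Hlt|Heq]; [exact Hlt|]. subst r. rewrite Hr in Hsign. lra.
  - destruct Hry as [Hlt|Heq]; [exact Hlt|]. subst r. rewrite Hr in Hsign. lra.
Qed.

Section StrictlyConvex.

Variables f df : R -> R.
Hypothesis f_cont : continuity f.
Hypothesis df_cont : continuity df.
Hypothesis tangent_lt : forall x0 x, x <> x0 -> f x0 + df x0 * (x - x0) < f x.
Hypothesis unbounded_right : forall x M, exists y, x < y /\ M < f y.
Hypothesis unbounded_left : forall x M, exists y, y < x /\ M < f y.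

Lemma tangent_le x0 x : f x0 + df x0 * (x - x0) <= f x.
Proof.
  destruct (Req_dec x x0) as [->|Hx]; [lra|].
  exact (Rlt_le _ _ (tangent_lt x0 x Hx)).
Qed.

Lemma slope_pos_of_le x y : x < y -> f x <= f y -> 0 < df y.
Proof. intros Hxy Hf. assert (T := tangent_lt y x ltac:(lra)). nra. Qed.

Lemma slope_neg_of_ge x y : x < y -> f y <= f x -> df x < 0.
Proof. intros Hxy Hf. assert (T := tangent_lt x y ltac:(lra)). nra. Qed.

Lemma exists_slope_root : exists m, df m = 0.
Proof.
  destruct (unbounded_left 0 (f 0)) as [lo [Hlo Hflo]].
  destruct (unbounded_right 0 (f 0)) as [hi [Hhi Hfhi]].
  assert (Hdlo : df lo < 0) by exact (slope_neg_of_ge lo 0 Hlo (Rlt_le _ _ Hflo)).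
  assert (Hdhi : 0 < df hi) by exact (slope_pos_of_le 0 hi Hhi (Rlt_le _ _ Hfhi)).
  destruct (exists_root_strictly_between df lo hi df_cont ltac:(lra) ltac:(nra))
    as [m [_ Hm]].
  now exists m.
Qed.

Lemma slope_root_minimizes m x : df m = 0 -> f m <= f x.
Proof. intros Hm. assert (T := tangent_le m x). rewrite Hm in T. lra. Qed.

Lemma minimizer_unique m x : df m = 0 -> (forall y, f x <= f y) -> x = m.
Proof.
  intros Hm Hx. destruct (Req_dec x m) as [|Hne]; [assumption|].
  assert (T := tangent_lt m x Hne). rewrite Hm in T. specialize (Hx m). lra.
Qed.

Lemma exists_neg_root_slope_shift z :
  (exists x, f x < 0) -> exists s, f s < 0 /\ df s + z * f s = 0.
Proof.
  intros [x Hx].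
  destruct (unbounded_left x 0) as [x1 [Hx1 Hfx1]].
  destruct (unbounded_right x 0) as [x2 [Hx2 Hfx2]].
  destruct (exists_root_strictly_between f x1 x f_cont Hx1 ltac:(nra)) as [a [[_ Ha] Hfa]].
  destruct (exists_root_strictly_between f x x2 f_cont Hx2 ltac:(nra)) as [b [[Hb _] Hfb]].
  assert (Hda : df a < 0) by exact (slope_neg_of_ge a x Ha ltac:(lra)).
  assert (Hdb : 0 < df b) by exact (slope_pos_of_le x b Hb ltac:(lra)).
  assert (Hh : continuity (fun t => df t + z * f t)).
  { apply (continuity_plus df (fun t => z * f t)); [exact df_cont|].
    exact (continuity_scal f z f_cont). }
  destruct (exists_root_strictly_between _ a b Hh ltac:(lra) ltac:(cbv beta; rewrite Hfa, Hfb; nra))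
    as [s [[Has Hsb] Hs]].
  exists s; split; [|exact Hs].
  (* f vanishes at a < s < b and lies strictly above its tangent at s *)
  assert (Ta := tangent_lt s a ltac:(lra)). assert (Tb := tangent_lt s b ltac:(lra)).
  rewrite Hfa in Ta. rewrite Hfb in Tb. nra.
Qed.

Lemma neg_root_slope_shift_unique z x y :
  f x < 0 -> f y < 0 -> df x + z * f x = 0 -> df y + z * f y = 0 -> x = y.
Proof.
  revert x y.
  enough (Hlt : forall x y, x < y ->
    f x < 0 -> f y < 0 -> df x + z * f x = 0 -> df y + z * f y = 0 -> False).
  { intros x y Hx Hy Hhx Hhy. destruct (Rtotal_order x y) as [H|[H|H]]; [|exact H|];
      exfalso; eauto. }
  intros x y Hxy Hx Hy Hhx Hhy.
  assert (Tx := tangent_lt x y ltac:(lra)). assert (Ty := tangent_lt y x ltac:(lra)).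
  set (d := y - x) in *.
  assert (Rx : f y > f x * (1 - z * d)) by (replace (df x) with (- z * f x) in Tx by lra; nra).
  assert (Ry : f x > f y * (1 + z * d))
    by (replace (df y) with (- z * f y) in Ty by lra; replace (x - y) with (- d) in Ty by (unfold d; ring); nra).
  destruct (Rle_lt_dec 0 (1 + z * d)) as [Hpos|Hneg]; [|nra].
  assert (f y * (1 + z * d) >= f x * (1 - z * d) * (1 + z * d)) by nra.
  assert (0 <= (z * d) * (z * d)) by nra.
  nra.
Qed.

End StrictlyConvex.

Lemma exp_affine_unbounded a b w : 0 < a -> 0 < w ->
  forall x M, exists y, x < y /\ M < a * exp (b + w * y).
Proof.
  intros Ha Hw x M.
  set (y := Rmax x ((M / a - b) / w) + 1).
  assert (Hx : x < y) by (unfold y; generalize (Rmax_l x ((M / a - b) / w)); lra).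
  assert (Hy : (M / a - b) / w < y) by (unfold y; generalize (Rmax_r x ((M / a - b) / w)); lra).
  exists y; split; [exact Hx|].
  assert (Hwy : M / a - b < w * y).
  { apply (Rmult_lt_compat_l w) in Hy; [|exact Hw].
    now replace (w * ((M / a - b) / w)) with (M / a - b) in Hy by (field; lra). }
  assert (H1 := exp_ineq1_le (b + w * y)).
  assert (M = a * (M / a)) by (field; lra). nra.
Qed.

Definition boltzmann (ce zv q : nat -> R) (phi : R) (k : nat) : R :=
  ce k * exp (- q k - zv k * phi).

(* The derivative of f_lin; only its role as slope of supporting lines is used. *)
Definition df_lin (N : nat) (ce zv q : nat -> R) (phi : R) : R :=
  rsum N (fun k => - zv k * boltzmann ce zv q phi k).

Section LinearPotential.

Variables (N : nat) (ce zv q : nat -> R).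
Hypothesis Hce : forall k, (k < N)%nat -> 0 < ce k.

Lemma boltzmann_pos phi k : (k < N)%nat -> 0 < boltzmann ce zv q phi k.
Proof. intros Hk. apply Rmult_lt_0_compat; [now apply Hce|apply exp_pos]. Qed.

Lemma f_lin_boltzmann phi : f_lin N ce zv q phi = rsum N (boltzmann ce zv q phi) - rsum N ce.
Proof.
  unfold f_lin. rewrite <- rsum_minus. apply rsum_ext. intros k _. unfold boltzmann. ring.
Qed.

Lemma charge_boltzmann phi :
  rsum N (fun k => zv k * boltzmann ce zv q phi k) = - df_lin N ce zv q phi.
Proof. unfold df_lin. rewrite <- rsum_opp. apply rsum_ext. intros k _. ring. Qed.

Lemma boltzmann_tangent_le x0 x k : (k < N)%nat ->
  boltzmann ce zv q x0 k * (1 - zv k * (x - x0)) <= boltzmann ce zv q x k.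
Proof.
  intros Hk.
  assert (E : boltzmann ce zv q x k = boltzmann ce zv q x0 k * exp (- (zv k * (x - x0)))).
  { unfold boltzmann. rewrite Rmult_assoc, <- exp_plus. do 2 f_equal. ring. }
  rewrite E. apply Rmult_le_compat_l; [exact (Rlt_le _ _ (boltzmann_pos x0 k Hk))|].
  generalize (exp_ineq1_le (- (zv k * (x - x0)))). lra.
Qed.

Lemma boltzmann_tangent_lt x0 x k : (k < N)%nat -> zv k <> 0 -> x <> x0 ->
  boltzmann ce zv q x0 k * (1 - zv k * (x - x0)) < boltzmann ce zv q x k.
Proof.
  intros Hk Hz Hx.
  assert (E : boltzmann ce zv q x k = boltzmann ce zv q x0 k * exp (- (zv k * (x - x0)))).
  { unfold boltzmann. rewrite Rmult_assoc, <- exp_plus. do 2 f_equal. ring. }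
  rewrite E. apply Rmult_lt_compat_l; [exact (boltzmann_pos x0 k Hk)|].
  assert (zv k * (x - x0) <> 0) by (apply Rmult_integral_contrapositive; split; lra).
  generalize (exp_ineq1 (- (zv k * (x - x0))) ltac:(lra)). lra.
Qed.

Lemma f_lin_tangent_lt j x0 x : (j < N)%nat -> zv j <> 0 -> x <> x0 ->
  f_lin N ce zv q x0 + df_lin N ce zv q x0 * (x - x0) < f_lin N ce zv q x.
Proof.
  intros Hj Hz Hx. rewrite !f_lin_boltzmann.
  set (F := fun k => boltzmann ce zv q x0 k * (1 - zv k * (x - x0))).
  assert (EF : rsum N F = rsum N (boltzmann ce zv q x0) + df_lin N ce zv q x0 * (x - x0)).
  { unfold df_lin. rewrite <- rsum_scal_r, <- rsum_plus. apply rsum_ext. intros k _.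
    unfold F. ring. }
  assert (Hgap := rsum_le_gap N F (boltzmann ce zv q x) j
    (fun k Hk => boltzmann_tangent_le x0 x k Hk) Hj).
  assert (Hj' := boltzmann_tangent_lt x0 x j Hj Hz Hx). fold (F j) in Hj'. lra.
Qed.

Lemma f_lin_continuity : continuity (f_lin N ce zv q).
Proof.
  apply (rsum_continuity N (fun k phi => ce k * (exp (- q k - zv k * phi) - 1))).
  intros k. reg.
Qed.

Lemma df_lin_continuity : continuity (df_lin N ce zv q).
Proof.
  apply (rsum_continuity N (fun k phi => - zv k * boltzmann ce zv q phi k)).
  intros k. unfold boltzmann. reg.
Qed.

Lemma f_lin_unbounded_right j : (j < N)%nat -> zv j < 0 ->
  forall x M, exists y, x < y /\ M < f_lin N ce zv q y.
Proof.
  intros Hj Hz x M.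
  destruct (exp_affine_unbounded (ce j) (- q j) (- zv j) (Hce j Hj) ltac:(lra)
              x (M + rsum N ce)) as [y [Hxy Hy]].
  exists y; split; [exact Hxy|].
  assert (Hb := rsum_le_gap N (fun _ => 0) (boltzmann ce zv q y) j
    (fun k Hk => Rlt_le _ _ (boltzmann_pos y k Hk)) Hj).
  assert (Ej : boltzmann ce zv q y j = ce j * exp (- q j + - zv j * y))
    by (unfold boltzmann; do 2 f_equal; ring).
  rewrite rsum_zero, Ej in Hb. rewrite f_lin_boltzmann.
  lra.
Qed.

End LinearPotential.

Lemma f_lin_reflect N ce zv q phi :
  f_lin N ce (fun k => - zv k) q (- phi) = f_lin N ce zv q phi.
Proof.
  apply rsum_ext. intros k _.
  now replace (- q k - - zv k * - phi) with (- q k - zv k * phi) by ring.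
Qed.

Lemma f_lin_unbounded_left N ce zv q j : (forall k, (k < N)%nat -> 0 < ce k) ->
  (j < N)%nat -> 0 < zv j -> forall x M, exists y, y < x /\ M < f_lin N ce zv q y.
Proof.
  intros Hce Hj Hz x M.
  destruct (f_lin_unbounded_right N ce (fun k => - zv k) q Hce j Hj ltac:(lra) (- x) M)
    as [y [Hxy Hy]].
  exists (- y); split; [lra|].
  now rewrite <- f_lin_reflect, Ropp_involutive.
Qed.

Lemma exists_pos_charge N zv ce : (forall k, (k < N)%nat -> 0 < ce k) ->
  rsum N (fun k => zv k * ce k) = 0 -> (exists k, (k < N)%nat /\ zv k <> 0) ->
  exists i, (i < N)%nat /\ 0 < zv i.
Proof.
  intros Hce Hneutral [k [Hk Hzk]].
  apply NNPP. intros Hnone.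
  assert (Hnonpos : forall i, (i < N)%nat -> zv i <= 0)
    by (intros i Hi; apply Rnot_lt_le; intros Hzi; apply Hnone; eauto).
  assert (Hterm : forall i, (i < N)%nat -> zv i * ce i <= 0)
    by (intros i Hi; generalize (Hnonpos i Hi) (Hce i Hi); nra).
  assert (Hgap := rsum_le_gap N (fun i => zv i * ce i) (fun _ => 0) k Hterm Hk).
  rewrite Hneutral, rsum_zero in Hgap.
  assert (zv k < 0) by (generalize (Hnonpos k Hk); lra).
  assert (0 < ce k) by now apply Hce. nra.
Qed.

Lemma exists_neg_charge N zv ce : (forall k, (k < N)%nat -> 0 < ce k) ->
  rsum N (fun k => zv k * ce k) = 0 -> (exists k, (k < N)%nat /\ zv k <> 0) ->
  exists i, (i < N)%nat /\ zv i < 0.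
Proof.
  intros Hce Hneutral [k [Hk Hzk]].
  destruct (exists_pos_charge N (fun k => - zv k) ce Hce) as [i [Hi Hzi]].
  - rewrite <- (Ropp_0), <- Hneutral, <- rsum_opp. apply rsum_ext. intros; ring.
  - exists k; split; [exact Hk|lra].
  - exists i; split; [exact Hi|lra].
Qed.

Lemma posdef_kernel_trivial N (L : nat -> nat -> R) (y : nat -> R) :
  (forall x : nat -> R, (exists i, (i < N)%nat /\ x i <> 0) ->
     0 < rsum N (fun i => rsum N (fun j => x i * L i j * x j))) ->
  (forall i, (i < N)%nat -> rsum N (fun j => L i j * y j) = 0) ->
  forall j, (j < N)%nat -> y j = 0.
Proof.
  intros Lpd Hy j Hj. apply NNPP. intros Hne.
  assert (Hpos := Lpd y (ex_intro _ j (conj Hj Hne))).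
  assert (E : rsum N (fun i => rsum N (fun j => y i * L i j * y j)) = 0).
  { rewrite <- (rsum_zero N). apply rsum_ext. intros i Hi.
    rewrite <- (Rmult_0_r (y i)), <- (Hy i Hi), <- rsum_scal_l.
    apply rsum_ext. intros; ring. }
  lra.
Qed.

Section SteadyStates.

Variables (N : nat) (zv ce : nat -> R) (A z : R) (L : nat -> nat -> R) (p q : nat -> R).
Hypothesis Hce : forall k, (k < N)%nat -> 0 < ce k.
Hypothesis HA : 0 < A.
Hypothesis Lpd : forall x : nat -> R, (exists i, (i < N)%nat /\ x i <> 0) ->
  0 < rsum N (fun i => rsum N (fun j => x i * L i j * x j)).
Hypothesis Hq : forall i, (i < N)%nat -> rsum N (fun j => L i j * q j) = p i.

Let f := f_lin N ce zv q.
Let df := df_lin N ce zv q.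

Lemma steady_state_inv c v phi : steady_state N zv ce A z L p c v phi ->
  (forall k, (k < N)%nat -> c k = boltzmann ce zv q phi k) /\
  f phi < 0 /\ A / v = - f phi /\ df phi + z * f phi = 0.
Proof.
  intros [Hc [Hv [Hel [Hmu Hpi]]]].
  (* L (mu + q) = L mu + p = 0, so mu = - q *)
  assert (Hmuq : forall j, (j < N)%nat -> mu ce zv c phi j + q j = 0).
  { apply (posdef_kernel_trivial N L _ Lpd). intros i Hi.
    rewrite (rsum_ext N _ (fun j => L i j * mu ce zv c phi j + L i j * q j)) by (intros; ring).
    rewrite rsum_plus, Hq by exact Hi. exact (Hmu i Hi). }
  assert (Hcb : forall k, (k < N)%nat -> c k = boltzmann ce zv q phi k).
  { intros k Hk. unfold boltzmann.
    assert (Eln : ln (c k / ce k) = - q k - zv k * phi)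
      by (generalize (Hmuq k Hk); unfold mu; lra).
    rewrite <- Eln, exp_ln by (apply Rdiv_lt_0_compat; auto).
    field. apply Rgt_not_eq, Hce, Hk. }
  assert (Hf : f phi = rsum N c - rsum N ce).
  { unfold f. rewrite f_lin_boltzmann. f_equal. symmetry. now apply rsum_ext. }
  assert (HAv : A / v = - f phi) by (unfold pi_w in Hpi; lra).
  assert (0 < A / v) by (apply Rdiv_lt_0_compat; assumption).
  assert (Hcharge : rsum N (fun k => zv k * c k) = - df phi).
  { unfold df. rewrite <- charge_boltzmann. apply rsum_ext. intros k Hk. now rewrite Hcb. }
  replace (z * A / v) with (z * (A / v)) in Hel by (unfold Rdiv; ring).
  rewrite Hcharge, HAv in Hel.
  repeat split; try assumption; lra.
Qed.

Lemma steady_state_of_root phi : f phi < 0 -> df phi + z * f phi = 0 ->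
  steady_state N zv ce A z L p (boltzmann ce zv q phi) (- A / f phi) phi.
Proof.
  intros Hf Hh.
  assert (HAv : A / (- A / f phi) = - f phi) by (field; lra).
  split; [|split; [|split; [|split]]].
  - intros k Hk. exact (boltzmann_pos N ce zv q Hce phi k Hk).
  - apply Rdiv_neg_neg; lra.
  - replace (z * A / (- A / f phi)) with (z * (A / (- A / f phi))) by (field; lra).
    rewrite HAv, charge_boltzmann. fold df. lra.
  - intros i Hi. rewrite <- Hq by exact Hi.
    rewrite (rsum_ext N _ (fun j => - (L i j * q j))); [rewrite rsum_opp; ring|].
    intros j Hj. unfold mu, boltzmann.
    replace (ce j * exp (- q j - zv j * phi) / ce j) with (exp (- q j - zv j * phi))
      by (field; apply Rgt_not_eq, Hce, Hj).
    rewrite ln_exp. ring.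
  - unfold pi_w. rewrite HAv. unfold f. rewrite f_lin_boltzmann. ring.
Qed.

End SteadyStates.

Theorem proposition2
  (N : nat) (zv ce : nat -> R) (A z : R)
  (L : nat -> nat -> R) (p q : nat -> R) (zeta : R)
  (HN : (2 <= N)%nat)
  (Hz : exists k, (k < N)%nat /\ zv k <> 0)
  (Hce : forall k, (k < N)%nat -> 0 < ce k)
  (Hneutral : rsum N (fun k => zv k * ce k) = 0)
  (HA : 0 < A)
  (Hzeta : 0 < zeta)
  (Lsym : forall i j, (i < N)%nat -> (j < N)%nat -> L i j = L j i)
  (Lpd : forall x : nat -> R, (exists i, (i < N)%nat /\ x i <> 0) ->
           0 < rsum N (fun i => rsum N (fun j => x i * L i j * x j)))
  (Hq : forall i, (i < N)%nat -> rsum N (fun j => L i j * q j) = p i) :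
  exists phimin : R,
    (forall phi, f_lin N ce zv q phimin <= f_lin N ce zv q phi) /\
    (forall phi', (forall phi, f_lin N ce zv q phi' <= f_lin N ce zv q phi) ->
                  phi' = phimin) /\
    (f_lin N ce zv q phimin < 0 ->
       exists (c : nat -> R) (v phi : R),
         steady_state N zv ce A z L p c v phi /\
         forall (c' : nat -> R) (v' phi' : R),
           steady_state N zv ce A z L p c' v' phi' ->
           (forall k, (k < N)%nat -> c' k = c k) /\ v' = v /\ phi' = phi) /\
    (0 <= f_lin N ce zv q phimin ->
       forall (c : nat -> R) (v phi : R), ~ steady_state N zv ce A z L p c v phi).
Proof.
  set (f := f_lin N ce zv q). set (df := df_lin N ce zv q).
  destruct Hz as [j0 [Hj0 Hzj0]].
  destruct (exists_pos_charge N zv ce Hce Hneutral (ex_intro _ j0 (conj Hj0 Hzj0)))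
    as [i [Hi Hzi]].
  destruct (exists_neg_charge N zv ce Hce Hneutral (ex_intro _ j0 (conj Hj0 Hzj0)))
    as [j [Hj Hzj]].
  assert (Hf : continuity f) by apply f_lin_continuity.
  assert (Hdf : continuity df) by apply df_lin_continuity.
  assert (Htan : forall x0 x, x <> x0 -> f x0 + df x0 * (x - x0) < f x)
    by (intros; now apply (f_lin_tangent_lt N ce zv q Hce j0)).
  assert (Hright := f_lin_unbounded_right N ce zv q Hce j Hj Hzj).
  assert (Hleft := f_lin_unbounded_left N ce zv q i Hce Hi Hzi).
  destruct (exists_slope_root f df Hdf Htan Hright Hleft) as [m Hm].
  exists m; split; [|split; [|split]].
  - intros phi. exact (slope_root_minimizes f df Htan m phi Hm).
  - intros phi' Hmin. exact (minimizer_unique f df Htan m phi' Hm Hmin).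
  - intros Hfm.
    destruct (exists_neg_root_slope_shift f df Hf Hdf Htan Hright Hleft z
                (ex_intro _ m Hfm)) as [s [Hfs Hs]].
    exists (boltzmann ce zv q s), (- A / f s), s.
    split; [now apply steady_state_of_root|].
    intros c' v' phi' Hss.
    destruct (steady_state_inv N zv ce A z L p q Hce HA Lpd Hq c' v' phi' Hss)
      as [Hc' [Hf' [HAv' Hh']]].
    assert (Ephi : phi' = s) by exact (neg_root_slope_shift_unique f df Htan z _ _ Hf' Hfs Hh' Hs).
    subst phi'. destruct Hss as [_ [Hv' _]].
    split; [exact Hc'|split; [|reflexivity]].
    replace v' with (A / (A / v')) by (field; lra). rewrite HAv'. unfold f. field. lra.
  - intros Hfm c v phi Hss.
    destruct (steady_state_inv N zv ce A z L p q Hce HA Lpd Hq c v phi Hss) as [_ [Hfphi _]].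
    generalize (slope_root_minimizes f df Htan m phi Hm). fold f in Hfphi. lra.
Qed.
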